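(* For all integers $m\ge n\ge 2$, $\gamma^{DLD}(K_n\times K_m)=\gamma^{DLD}(K_n\square K_m)$.
   Context: $K_q$ is the complete graph on vertex set $\{1,\dots,q\}$. The Cartesian product $G_1\square G_2$ has vertex set $V_1\times V_2$, with $(u_1,u_2)$ adjacent to $(v_1,v_2)$ iff ($u_1=v_1$ and $u_2v_2\in E_2$) or ($u_2=v_2$ and $u_1v_1\in E_1$). The direct product $G_1\times G_2$ has vertex set $V_1\times V_2$, with $(u_1,u_2)$ adjacent to $(v_1,v_2)$ iff $u_1v_1\in E_1$ and $u_2v_2\in E_2$. For a code (nonempty vertex subset) $C$ and vertex $v$, $I(C;v)=N[v]\cap C$, where $N[v]$ is the closed neighbourhood. A code $C$ is solid-locating-dominating if for all distinct non-codewords $u,v$, $I(C;u)\setminus I(C;v)\ne\emptyset$. $\gamma^{DLD}(G)$ is the minimum size of a solid-locating-dominating code in the finite graph $G$. *)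

From mathcomp Require Import all_boot.
Set Implicit Arguments. Unset Strict Implicit. Unset Printing Implicit Defensive.

(* A finite simple graph: vertex finType V with adjacency relation adj
   (symmetric and irreflexive for the graphs used here). *)

Definition closed_nbhd (V : finType) (adj : rel V) (v : V) : {set V} :=
  [set u | (u == v) || adj v u].

Definition Iset (V : finType) (adj : rel V) (C : {set V}) (v : V) : {set V} :=
  closed_nbhd adj v :&: C.

Definition solid_locating_dominating (V : finType) (adj : rel V) (C : {set V}) : bool :=
  (C != set0) &&
  [forall u, forall v,
     ((u \notin C) && (v \notin C) && (u != v)) ==>
       (Iset adj C u :\: Iset adj C v != set0)].

(* gamma^DLD(G): minimum size of a solid-locating-dominating code
   (#|V| is an upper bound, attained by C = V when V is nonempty). *)
Definition gammaDLD (V : finType) (adj : rel V) : nat :=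
  \big[minn/#|V|]_(C : {set V} | solid_locating_dominating adj C) #|C|.

(* Complete graph K_q on 'I_q (representing {1,...,q}). *)
Definition Kadj (q : nat) : rel 'I_q := fun i j => i != j.

Definition cart_adj (V1 V2 : finType) (e1 : rel V1) (e2 : rel V2) : rel (V1 * V2) :=
  fun x y => ((x.1 == y.1) && e2 x.2 y.2) || ((x.2 == y.2) && e1 x.1 y.1).

Definition direct_adj (V1 V2 : finType) (e1 : rel V1) (e2 : rel V2) : rel (V1 * V2) :=
  fun x y => e1 x.1 y.1 && e2 x.2 y.2.

From mathcomp Require Import all_boot.

(* For a non-codeword u every codeword differs from u, so if two graphs on the
   same vertices are complements of each other, I(C;u) in one is the
   complement in C of I(C;u) in the other.  Complementing within C turns
   I(C;u) \ I(C;v) into I(C;v) \ I(C;u), and the solid-locating condition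
   ranges over both orders of each pair, so the two graphs have the same
   solid-locating-dominating codes.  The direct product K_n x K_m is the
   complement of the rook graph K_n □ K_m: distinct vertices are adjacent in
   the former iff they differ in both coordinates, in the latter iff they
   agree in exactly one. *)

Lemma sld_Iset_diff_swap (V : finType) (g h : rel V) (C : {set V}) :
    (forall u v, u \notin C -> v \notin C ->
       Iset g C u :\: Iset g C v = Iset h C v :\: Iset h C u) ->
  solid_locating_dominating h C -> solid_locating_dominating g C.
Proof.
move=> gh /andP[C0 /forallP hC]; rewrite /solid_locating_dominating C0 /=.
apply/forallP => u; apply/forallP => v; apply/implyP => /andP[/andP[uC vC] uv].
rewrite gh //; move/forallP/(_ u)/implyP: (hC v); apply.
by rewrite vC uC eq_sym.
Qed.

Section ComplementGraphs.

Variables (V : finType) (e f : rel V).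
Hypothesis f_compl : forall x y, x != y -> f x y = ~~ e x y.

Lemma Iset_compl (C : {set V}) u : u \notin C -> Iset f C u = C :\: Iset e C u.
Proof.
move=> uC; apply/setP => x; rewrite !inE.
case xC: (x \in C); rewrite ?andbF //= !andbT.
have ux : u != x by apply: contraNneq uC => ->.
by rewrite eq_sym (negPf ux) /= f_compl.
Qed.

Lemma Iset_diff_compl (C : {set V}) u v : u \notin C -> v \notin C ->
  Iset f C u :\: Iset f C v = Iset e C v :\: Iset e C u.
Proof.
move=> uC vC; rewrite !Iset_compl //; apply/setP => x; rewrite !inE.
by case: (x \in C); rewrite ?andbF //= !andbT negbK andbC.
Qed.

Lemma sld_compl (C : {set V}) :
  solid_locating_dominating f C = solid_locating_dominating e C.
Proof.
by apply/idP/idP; apply: sld_Iset_diff_swap => u v uC vC; rewrite Iset_diff_compl.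
Qed.

Lemma gammaDLD_compl : gammaDLD f = gammaDLD e.
Proof. by apply: eq_bigl => C; rewrite sld_compl. Qed.

End ComplementGraphs.

Lemma direct_adj_complete_compl n m (x y : 'I_n * 'I_m) : x != y ->
  direct_adj (@Kadj n) (@Kadj m) x y = ~~ cart_adj (@Kadj n) (@Kadj m) x y.
Proof.
case: x y => [x1 x2] [y1 y2]; rewrite /direct_adj /cart_adj /Kadj /= xpair_eqE.
by case: (x1 == y1); case: (x2 == y2).
Qed.

Theorem theorem17 (n m : nat) (h2n : 2 <= n) (hnm : n <= m) :
  gammaDLD (direct_adj (@Kadj n) (@Kadj m)) = gammaDLD (cart_adj (@Kadj n) (@Kadj m)).
Proof. exact/gammaDLD_compl/direct_adj_complete_compl. Qed.
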